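(* Let $R$ be a commutative ring with identity and $a\in R$. The functor $a\Gamma_a: R\text{-Mod}\to R\text{-Mod}$, $M\mapsto a\Gamma_a(M)$, is a radical: for every $R$-module homomorphism $f:M\to N$ one has $f(a\Gamma_a(M))\subseteq a\Gamma_a(N)$, and for every $R$-module $M$ one has $a\Gamma_a(M/a\Gamma_a(M))=0$.
   Context: For an $R$-module $M$ and $a\in R$: $\Gamma_{a}(M)=\{m\in M \mid a^{k}m=0 \text{ for some } k\in\mathbb{Z}^{+}\}$ and $a\Gamma_{a}(M)=\{am \mid m\in \Gamma_a(M)\}$ (a submodule of $M$). A functor $\gamma$ assigning to each module $M$ a submodule $\gamma(M)$ is a preradical if $f(\gamma(M))\subseteq\gamma(N)$ for all homomorphisms $f:M\to N$, and a radical if moreover $\gamma(M/\gamma(M))=0$ for all $M$. *)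

From HB Require Import structures.
From mathcomp Require Import all_boot all_order all_algebra.
Set Implicit Arguments. Unset Strict Implicit. Unset Printing Implicit Defensive.
Import GRing.Theory.
Local Open Scope ring_scope.

Definition Gamma (R : comPzRingType) (M : lmodType R) (a : R) (m : M) : Prop :=
  exists k : nat, (0 < k)%N /\ a ^+ k *: m = 0.

Definition aGamma (R : comPzRingType) (M : lmodType R) (a : R) (x : M) : Prop :=
  exists m : M, Gamma a m /\ x = a *: m.

From HB Require Import structures.
From mathcomp Require Import all_boot all_order all_algebra.
Import GRing.Theory.
Local Open Scope ring_scope.

(* If a^k m = a n with a^j n = 0, then a^(k+j) m = a (a^j n) = 0, so m is in
   Gamma_a(M) and a m is in a Gamma_a(M).  Thus an element a (pi m) of the quotient
   killed by a^k already vanishes. *)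

Section ATorsion.

Variables (R : comPzRingType) (a : R).

Lemma Gamma_linear (M N : lmodType R) (f : {linear M -> N}) (m : M) :
  Gamma a m -> Gamma a (f m).
Proof. by move=> [k [k_gt0 akm0]]; exists k; rewrite -linearZ akm0 linear0. Qed.

Lemma aGamma_linear (M N : lmodType R) (f : {linear M -> N}) (x : M) :
  aGamma a x -> aGamma a (f x).
Proof.
by move=> [m [Gm ->]]; exists (f m); rewrite linearZ; split=> //; apply: Gamma_linear.
Qed.

Lemma Gamma_of_aGamma_exprZ (M : lmodType R) (m : M) (k : nat) :
  aGamma a (a ^+ k *: m) -> Gamma a m.
Proof.
move=> [n [[j [j_gt0 ajn0]] akm]].
exists (k + j)%N; split; first by rewrite addn_gt0 j_gt0 orbT.
by rewrite exprD mulrC -scalerA akm scalerA -exprSr exprS -scalerA ajn0 scaler0.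
Qed.

End ATorsion.

Theorem mainTheorem6 (R : comPzRingType) (a : R) :
  (* preradical: homomorphisms map aGamma_a(M) into aGamma_a(N) *)
  (forall (M N : lmodType R) (f : {linear M -> N}) (x : M),
      aGamma a x -> aGamma a (f x)) /\
  (* radical: aGamma_a(M / aGamma_a(M)) = 0, the quotient M/aGamma_a(M) being
     given by any surjective homomorphism pi : M -> Q with kernel aGamma_a(M) *)
  (forall (M Q : lmodType R) (pi : {linear M -> Q}),
      (forall q : Q, exists m : M, pi m = q) ->
      (forall m : M, pi m = 0 <-> aGamma a m) ->
      forall q : Q, aGamma a q -> q = 0).
Proof.
split; first exact: aGamma_linear.
move=> M Q pi pi_surj ker_pi _ [q [[k [_ akq0]] ->]].
have [m pim] := pi_surj q.
have akm_aGamma : aGamma a (a ^+ k *: m) by apply/ker_pi; rewrite linearZ pim.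
have Gm : Gamma a m by apply: Gamma_of_aGamma_exprZ akm_aGamma.
by rewrite -pim -linearZ; apply/ker_pi; exists m.
Qed.
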